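(* Let $G$ be a finite abelian group and $H$ a proper subgroup of $G$. Let $\mathcal P=P_0\mid P_1\mid\cdots\mid P_M$ be a partition of $H$, and let its dual partition (a partition of $\widehat H$) be $\widehat{\mathcal P}=Q_0\mid Q_1\mid\cdots\mid Q_L$, indexed so that $Q_0=\{\varepsilon_H\}$. Let $K_{\ell,m}$ ($\ell\in\{0,\dots,L\}$, $m\in\{0,\dots,M\}$) be the Krawtchouk coefficients of $(\mathcal P,\widehat{\mathcal P})$. Put $P_{-1}:=G\setminus H$ and $\mathcal P'=P_{-1}\mid P_0\mid\cdots\mid P_M$, a partition of $G$. Then the dual partition of $\mathcal P'$ is $\widehat{\mathcal P'}=Q'_{-1}\mid Q'_0\mid Q'_1\mid\cdots\mid Q'_L$, where $Q'_{-1}=H^{\perp}\setminus\{\varepsilon_G\}$, $Q'_0=\{\varepsilon_G\}$ and $Q'_\ell=\{\chi\in\widehat G\setminus H^\perp : \chi|_H\in Q_\ell\}$ for $\ell=1,\dots,L$ (all empty sets being discarded). The Krawtchouk coefficients $K'_{\ell,m}$ ($\ell\in\{-1,\dots,L\}$, $m\in\{-1,\dots,M\}$) of $(\mathcal P',\widehat{\mathcal P'})$ are: $K'_{-1,-1}=-|H|$, $K'_{-1,m}=|P_m|$ for $m\ge 0$; $K'_{0,-1}=|P_{-1}|$, $K'_{0,m}=K_{0,m}$ for $m\ge0$; and for $\ell\ge1$: $K'_{\ell,-1}=0$, $K'_{\ell,m}=K_{\ell,m}$ for $m\ge0$. Consequently, if $\mathcal P$ is reflexive, then so is $\mathcal 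P'$.
   Context: For a finite abelian group $G$, $\widehat G=\mathrm{Hom}(G,\mathbb C^* )$ is its character group, with zero element the principal character $\varepsilon_G\equiv1$; $\chi|_H$ denotes restriction, and $H^\perp=\{\chi\in\widehat G:\chi(h)=1\ \forall h\in H\}$. For a partition $\mathcal P=P_1\mid\cdots\mid P_M$ of $G$, its dual partition $\widehat{\mathcal P}$ is the partition of $\widehat G$ given by $\chi\sim\chi'$ iff $\sum_{g\in P_m}\chi(g)=\sum_{g\in P_m}\chi'(g)$ for all $m$. (The singleton $\{\varepsilon\}$ is always a block of a dual partition.) If $\widehat{\mathcal P}=Q_1\mid\cdots\mid Q_L$, the Krawtchouk coefficients of $(\mathcal P,\widehat{\mathcal P})$ are $K_{\ell,m}=\sum_{g\in P_m}\chi(g)$ for any $\chi\in Q_\ell$ (independent of the choice of $\chi$). $\mathcal P$ is reflexive if its bidual (a partition of $\widehat{\widehat G}\cong G$ via the canonical isomorphism) equals $\mathcal P$; equivalently, $\mathcal P$ and $\widehat{\mathcal P}$ have the same number of blocks. *)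

From HB Require Import structures.
From mathcomp Require Import all_boot all_order all_algebra all_fingroup all_solvable all_field all_character.
Unset Printing Implicit Defensive.
Import GRing.Theory Num.Theory.
Local Open Scope ring_scope.

(* The character group \hat G of a finite abelian group G is represented by
   the index type [Iirr G] of the irreducible characters 'chi[G]_i
   (for abelian G these are exactly the homomorphisms G -> C^x);
   the principal character eps_G is 'chi[G]_0 = 1, with index 0. *)

Definition dual_rel {gT : finGroupType} (G : {group gT}) (P : {set {set gT}})
  (i j : Iirr G) : bool :=
  [forall B in P, (\sum_(g in B) 'chi[G]_i g) == (\sum_(g in B) 'chi[G]_j g)].

Definition dual_partition {gT : finGroupType} (G : {group gT})
  (P : {set {set gT}}) : {set {set Iirr G}} :=
  equivalence_partition (dual_rel G P) [set: Iirr G].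

Definition kraw {gT : finGroupType} (G : {group gT}) (Q : {set Iirr G})
  (B : {set gT}) : algC :=
  \sum_(g in B) 'chi[G]_(odflt 0 [pick i in Q]) g.

(* The bidual partition, pulled back to G along the canonical isomorphism
   G -> \hat{\hat G}, g |-> (chi |-> chi g):
   g ~ g' iff for every block Q of the dual, \sum_{chi in Q} chi g = \sum_{chi in Q} chi g'. *)
Definition bidual_partition {gT : finGroupType} (G : {group gT})
  (P : {set {set gT}}) : {set {set gT}} :=
  equivalence_partition
    (fun g h => [forall Q in dual_partition G P,
        (\sum_(i in Q) 'chi[G]_i g) == (\sum_(i in Q) 'chi[G]_i h)]) G.

Definition reflexive_partition {gT : finGroupType} (G : {group gT})
  (P : {set {set gT}}) : bool :=
  bidual_partition G P == P.

Definition perp {gT : finGroupType} (G H : {group gT}) : {set Iirr G} :=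
  [set i : Iirr G | [forall h in H, 'chi[G]_i h == 1]].

Definition lift_block {gT : finGroupType} (G H : {group gT}) (Q : {set Iirr H})
  : {set Iirr G} :=
  [set i : Iirr G | (i \notin perp G H) &&
     [exists j in Q, 'Res[H] 'chi[G]_i == 'chi[H]_j]].

From HB Require Import structures.
From mathcomp Require Import all_boot all_order all_algebra all_fingroup all_solvable all_field all_character.
From mathcomp Require Import ring.
Import GRing.Theory Num.Theory.
Local Open Scope ring_scope.

(* Characters of G are indexed by Iirr G; since G is abelian they are all linear,
   so restriction r := Res_Iirr H maps them onto the characters of H, and
   H^perp = r^-1(0).  Two facts about r drive the proof:
   - orthogonality: the sum of chi over a group K is |K| if chi is principal and 0
     otherwise, so the sum of chi_i over G \ H is |G| [i = 0] - |H| [r i = 0];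
   - fibres: for g in G, the sum of chi_i(g) over r i = j is [G:H] chi_j(g)
     (chi_j extended by 0 off H), by Frobenius reciprocity; hence every fibre has
     [G:H] > 1 elements and H^perp has a non-principal character.
   Blocks of P lie in H, so chi_i ~ chi_k for P' iff i, k agree on [i = 0] and
   [r i = 0] and r i ~ r k for P.  This yields the three kinds of dual blocks
   and their Krawtchouk coefficients.  Summing characters over the dual blocks of
   P' separates G \ H from H, is constant on G \ H, and on H is [G:H] times the
   sums over the dual blocks of P (less the principal character); so the bidual
   classes of P' are G \ H and the bidual classes of P, whence reflexivity. *)

(* [kraw] evaluates a chosen element of a block: it lies in the block when the
   block is nonempty, and is forced when the block is a singleton. *)
Lemma pick_in {T : finType} {Q : {set T}} (x0 : T) :
  Q != set0 -> exists2 i, i \in Q & odflt x0 [pick i in Q] = i.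
Proof.
move=> /set0Pn[j Qj]; case: pickP => [i Qi | none]; first by exists i.
by have := none j; rewrite Qj.
Qed.

Lemma pick_set1 {T : finType} (x0 x : T) : odflt x0 [pick i in [set x]] = x.
Proof.
case: pickP => [i | none]; first by rewrite inE => /eqP.
by have := none x; rewrite inE eqxx.
Qed.

Section GeneralCharacterFacts.
Context {gT : finGroupType}.
Implicit Types (K : {group gT}) (B : {set gT}).

Lemma abelian_irr1 K (i : Iirr K) : abelian K -> 'chi[K]_i 1%g = 1.
Proof. by move=> abK; exact: lin_char1 (char_abelianP K abK i). Qed.

Lemma sum_irr K (i : Iirr K) : \sum_(g in K) 'chi[K]_i g = #|K|%:R * (i == 0)%:R.
Proof.
have nzK : (#|K|%:R : algC) != 0 by rewrite pnatr_eq0 -lt0n cardG_gt0.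
rewrite -cfdot_irr cfdotE irr0 mulrA mulfV // mul1r.
by apply: eq_bigr => g Kg; rewrite cfun1E Kg conjC1 mulr1.
Qed.

Lemma sum_cfun1 K B : B \subset K -> \sum_(g in B) (1 : 'CF(K)) g = #|B|%:R.
Proof.
move=> sBK; rewrite -sumr_const; apply: eq_bigr => g Bg.
by rewrite cfun1E (subsetP sBK).
Qed.

Lemma dual_rel_refl K (P : {set {set gT}}) (i : Iirr K) : dual_rel K P i i.
Proof. by apply/forall_inP. Qed.

Lemma dual_rel_left K (P : {set {set gT}}) (i j k : Iirr K) :
  dual_rel K P i j -> dual_rel K P i k = dual_rel K P j k.
Proof.
move/forall_inP => eij; apply/forall_inP/forall_inP => e B PB.
  by rewrite -(eqP (eij B PB)); apply: e.
by rewrite (eqP (eij B PB)); apply: e.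
Qed.

Definition dual_class K (P : {set {set gT}}) (i : Iirr K) : {set Iirr K} :=
  [set k in [set: Iirr K] | dual_rel K P i k].

Lemma dual_partitionE K (P : {set {set gT}}) :
  dual_partition K P = [set dual_class K P i | i in [set: Iirr K]].
Proof. by []. Qed.

Lemma mem_dual_class K (P : {set {set gT}}) (i : Iirr K) : i \in dual_class K P i.
Proof. by rewrite !inE dual_rel_refl. Qed.

Lemma dual_class_eq K (P : {set {set gT}}) (i k : Iirr K) :
  k \in dual_class K P i -> dual_class K P k = dual_class K P i.
Proof. by rewrite !inE => /dual_rel_left e; apply/setP => y; rewrite !inE e. Qed.

Definition bidual_rel K (P : {set {set gT}}) (g h : gT) : bool :=
  [forall Q in dual_partition K P,
     (\sum_(i in Q) 'chi[K]_i g) == (\sum_(i in Q) 'chi[K]_i h)].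

Lemma bidual_partitionE K (P : {set {set gT}}) :
  bidual_partition K P = [set [set y in K | bidual_rel K P x y] | x in K].
Proof. by []. Qed.

Lemma sum_irr_split K (Q : {set Iirr K}) g : g \in K ->
  \sum_(j in Q) 'chi[K]_j g = \sum_(j in Q | j != 0) 'chi[K]_j g + (0 \in Q)%:R.
Proof.
move=> Kg; case: (boolP (0 \in Q)) => Q0; first by rewrite (bigD1 0) //= irr0 cfun1E Kg addrC.
rewrite addr0; apply: eq_bigl => j; case: (boolP (j \in Q)) => //= jQ.
by apply/esym; apply: contraNneq Q0 => <-.
Qed.

End GeneralCharacterFacts.

Section Restriction.
Variables (gT : finGroupType) (G H : {group gT}).
Hypotheses (abelG : abelian G) (sHG : H \subset G).
Local Notation r := (Res_Iirr H).

Lemma Res_irrE (i : Iirr G) : 'Res[H] 'chi[G]_i = 'chi[H]_(r i).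
Proof. by rewrite lin_Res_IirrE // abelian_irr1. Qed.

Lemma irr_on_sub (i : Iirr G) h : h \in H -> 'chi[G]_i h = 'chi[H]_(r i) h.
Proof. by move=> Hh; rewrite -Res_irrE cfResE. Qed.

Lemma perp_Res (i : Iirr G) : (i \in perp G H) = (r i == 0).
Proof.
rewrite inE; apply/forall_inP/eqP => [chi1 | ri0 h Hh].
  apply: irr_inj; rewrite irr0; apply/cfunP => x; rewrite cfun1E.
  case: (boolP (x \in H)) => Hx; last by rewrite cfun0.
  by rewrite -irr_on_sub //; apply/eqP/chi1.
by rewrite irr_on_sub // ri0 irr0 cfun1E Hh.
Qed.

Lemma lift_blockE (Q : {set Iirr H}) (k : Iirr G) :
  (k \in lift_block G H Q) = (r k != 0) && (r k \in Q).
Proof.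
rewrite inE perp_Res; congr andb; apply/existsP/idP => [[j /andP[Qj]] | Qrk].
  by rewrite Res_irrE (inj_eq irr_inj) => /eqP ->.
by exists (r k); rewrite Qrk Res_irrE eqxx.
Qed.

(* The characters of G restricting to chi_j sum to the induced character of chi_j,
   which on the abelian group G is [G:H] chi_j. *)
Lemma fibre_sum (j : Iirr H) g : g \in G ->
  \sum_(i | r i == j) 'chi[G]_i g = #|G : H|%g%:R * 'chi[H]_j g.
Proof.
move=> Gg.
have IndE : ('Ind[G] 'chi[H]_j) g = #|G : H|%g%:R * 'chi[H]_j g.
  rewrite cfIndE // (eq_bigr (fun=> 'chi[H]_j g)); last first.
    by move=> y Gy; rewrite conjgE (centsP abelG g Gg y Gy) mulKg.
  have nzH : (#|H|%:R : algC) != 0 by rewrite pnatr_eq0 -lt0n cardG_gt0.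
  rewrite sumr_const -(Lagrange sHG) -(mulr_natl ('chi_j g)) natrM.
  by field.
rewrite -IndE (cfun_sum_cfdot ('Ind[G] 'chi[H]_j)) sum_cfunE big_mkcond /=.
apply: eq_bigr => i _; rewrite cfunE -Frobenius_reciprocity Res_irrE cfdot_irr.
by rewrite eq_sym; case: eqP; rewrite ?mul1r ?mul0r.
Qed.

(* Evaluating the fibre sum at 1: each fibre of r has [G:H] elements. *)
Lemma card_fibre (j : Iirr H) : #|[set i : Iirr G | r i == j]| = #|G : H|%g.
Proof.
have := fibre_sum j 1%g (group1 G); rewrite abelian_irr1 ?(abelianS sHG) // mulr1.
rewrite (eq_bigr (fun=> 1)) => [|i _]; last exact: abelian_irr1.
by rewrite sumr_const -cardsE => /eqP; rewrite eqr_nat => /eqP.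
Qed.

Lemma perp_sum g : g \in G ->
  \sum_(i in perp G H :\ (0 : Iirr G)) 'chi[G]_i g = #|G : H|%g%:R * (g \in H)%:R - 1.
Proof.
move=> Gg; have perp0 : (0 : Iirr G) \in perp G H by rewrite perp_Res Res_Iirr0.
have split_0 : \sum_(i in perp G H) 'chi[G]_i g =
    'chi[G]_0 g + \sum_(i in perp G H :\ (0 : Iirr G)) 'chi[G]_i g := big_setD1 0 perp0.
apply: (addrI ('chi[G]_0 g)); rewrite -split_0 irr0 cfun1E Gg addrC subrK.
by rewrite (eq_bigl _ _ perp_Res) fibre_sum // irr0 cfun1E.
Qed.

Lemma lift_block_sum (Q : {set Iirr H}) g : g \in G ->
  \sum_(i in lift_block G H Q) 'chi[G]_i g =
  #|G : H|%g%:R * \sum_(j in Q | j != 0) 'chi[H]_j g.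
Proof.
move=> Gg; rewrite (eq_bigl _ _ (lift_blockE Q)).
rewrite (partition_big r (fun j => (j \in Q) && (j != 0))) => [|i /andP[? ?]]; last exact/andP.
rewrite mulr_sumr; apply: eq_bigr => j /andP[jQ j0]; rewrite -fibre_sum //.
by apply: eq_bigl => i; have [-> | _] := eqVneq (r i) j; rewrite ?andbF ?j0 ?jQ.
Qed.

Definition outer_sum (i : Iirr G) : algC := \sum_(g in G :\: H) 'chi[G]_i g.

(* By orthogonality on G and on H. *)
Lemma outer_sumE i :
  outer_sum i = #|G|%:R * (i == 0)%:R - #|H|%:R * (r i == 0)%:R.
Proof.
have splitG : \sum_(g in G) 'chi[G]_i g = \sum_(g in H) 'chi[G]_i g + outer_sum i.
  by rewrite (big_setID H) (setIidPr sHG).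
have sumH : \sum_(g in H) 'chi[G]_i g = #|H|%:R * (r i == 0)%:R.
  by rewrite -sum_irr; apply: eq_bigr => g; exact: irr_on_sub.
by rewrite -sumH -sum_irr splitG addrAC subrr add0r.
Qed.

Section ProperSubgroup.
Hypothesis properHG : H \proper G.

(* Since [G:H] > 1, H^perp contains a non-principal character. *)
Lemma perp_nontrivial : perp G H :\ (0 : Iirr G) != set0.
Proof.
have : (1 < #|[set i : Iirr G | r i == 0%R]|)%N.
  by rewrite card_fibre indexg_gt1 proper_subn.
case/card_gt1P => i [k [ri0 rk0 neq_ik]]; rewrite !inE in ri0 rk0; apply/set0Pn.
have [i0 | i0] := eqVneq i 0; [exists k | exists i]; rewrite in_setD1 perp_Res ?rk0 ?ri0 andbT //.
by rewrite eq_sym -i0.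
Qed.

(* The sum over G \ H determines whether chi_i is principal and whether it lies
   in H^perp: its three possible values |G| - |H|, - |H| and 0 are distinct. *)
Lemma outer_sum_eq i k : (outer_sum i == outer_sum k) =
  ((i == 0) == (k == 0)) && ((r i == 0) == (r k == 0)).
Proof.
have nzG : (#|G|%:R : algC) != 0 by rewrite pnatr_eq0 -lt0n cardG_gt0.
have nzH : (#|H|%:R : algC) != 0 by rewrite pnatr_eq0 -lt0n cardG_gt0.
have nGH : (#|G|%:R : algC) != #|H|%:R.
  by rewrite eqr_nat; have := proper_card properHG; case: ltngtP.
rewrite !outer_sumE.
have [-> | i0] := eqVneq i 0; have [-> | k0] := eqVneq k 0;
  rewrite ?Res_Iirr0 ?eqxx //=;
  try case: (r i == 0); try case: (r k == 0);
  rewrite /= ?mulr0 ?mulr1 ?sub0r ?subr0 ?oppr0 ?eqxx //.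
all: by [ rewrite subr_eq addNr (negPf nzG) | rewrite subr_eq0 (negPf nGH)
        | rewrite oppr_eq0 (negPf nzH) | rewrite eq_sym subr_eq addNr (negPf nzG)
        | rewrite eq_sym subr_eq0 (negPf nGH) | rewrite eq_sym oppr_eq0 (negPf nzH) ].
Qed.

Section DualPartition.
Variable P : {set {set gT}}.
Hypothesis partP : partition P H.
Local Notation P' := ((G :\: H) |: P).

Lemma block_subH B : B \in P -> B \subset H.
Proof. by case/and3P: partP => /eqP <- _ _ PB; exact: bigcup_sup. Qed.

Lemma block_sum (i : Iirr G) B : B \in P ->
  \sum_(g in B) 'chi[G]_i g = \sum_(g in B) 'chi[H]_(r i) g.
Proof. by move/block_subH/subsetP => sBH; apply: eq_bigr => g /sBH; exact: irr_on_sub. Qed.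

Lemma dual_rel_ext i k : dual_rel G P' i k =
  [&& (i == 0) == (k == 0), (r i == 0) == (r k == 0) & dual_rel H P (r i) (r k)].
Proof.
rewrite andbA -outer_sum_eq; apply/forall_inP/andP => [e | [e_out /forall_inP e] B].
  split; first exact/e/setU11.
  by apply/forall_inP => B PB; rewrite -!block_sum //; apply/e/setU1r.
by rewrite in_setU1 => /predU1P[-> // | PB]; rewrite !block_sum //; apply: e.
Qed.


Lemma dual_class_principal : dual_class G P' 0 = [set (0 : Iirr G)].
Proof.
apply/setP => k; rewrite !inE dual_rel_ext Res_Iirr0 !eqxx /=.
have [-> | //] := eqVneq k 0.
by rewrite Res_Iirr0 !eqxx dual_rel_refl.
Qed.

Lemma dual_class_perp i : i != 0 -> r i == 0 -> dual_class G P' i = perp G H :\ (0 : Iirr G).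
Proof.
move=> i0 /eqP ri0; apply/setP => k; rewrite in_setD1 perp_Res !inE dual_rel_ext ri0.
rewrite (negPf i0) eqxx /=; case: (k == 0) => //=.
by have [-> | //] := eqVneq (r k) 0; rewrite dual_rel_refl.
Qed.

Lemma dual_class_lift i : r i != 0 ->
  dual_class G P' i = lift_block G H (dual_class H P (r i)).
Proof.
move=> ri0; have i0 : i != 0 by apply: contraNneq ri0 => ->; rewrite Res_Iirr0.
apply/setP => k; rewrite lift_blockE !inE dual_rel_ext (negPf i0) (negPf ri0) /=.
have [-> | _] := eqVneq k 0; first by rewrite Res_Iirr0 eqxx.
by case: (r k == 0).
Qed.

Lemma dual_partition_ext : dual_partition G P' =
  [set Q in perp G H :\ (0 : Iirr G) |: ([set (0 : Iirr G)] |: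
     [set lift_block G H Q | Q in dual_partition H P :\ [set (0 : Iirr H)]])
   | Q != set0].
Proof.
apply/setP => X; rewrite dual_partitionE in_set !in_setU1.
apply/imsetP/andP => [[i _ ->] | [kind_X nzX]].
  split; last by apply/set0Pn; exists i; exact: mem_dual_class.
  have [-> | i0] := eqVneq i 0; first by rewrite dual_class_principal eqxx orbT.
  have [ri0 | ri0] := eqVneq (r i) 0; first by rewrite dual_class_perp ?ri0 ?eqxx.
  rewrite dual_class_lift // imset_f ?orbT // in_setD1 dual_partitionE imset_f ?andbT //.
  apply: contra_neq ri0 => E; have := mem_dual_class H P (r i).
  by rewrite E inE => /eqP.
case/or3P: kind_X => [/eqP EX | /eqP EX | /imsetP[Q HQ EX]].
- move: nzX; rewrite EX => /set0Pn[i]; rewrite in_setD1 perp_Res => /andP[i0 ri0].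
  by exists i => //; rewrite dual_class_perp.
- by exists 0 => //; rewrite dual_class_principal EX.
move: nzX; rewrite EX => /set0Pn[i]; rewrite lift_blockE => /andP[ri0 riQ].
exists i => //; rewrite dual_class_lift //; congr lift_block.
move: HQ riQ; rewrite in_setD1 dual_partitionE => /andP[_ /imsetP[j _ ->]].
by move/dual_class_eq ->.
Qed.

Lemma kraw_perp :
  kraw G (perp G H :\ (0 : Iirr G)) (G :\: H) = - (#|H|%:R) /\
  (forall B, B \in P -> kraw G (perp G H :\ (0 : Iirr G)) B = #|B|%:R).
Proof.
have [i] := pick_in 0 perp_nontrivial.
rewrite in_setD1 perp_Res => /andP[i0 /eqP ri0] pick_i; rewrite /kraw pick_i; split.
  by rewrite -/(outer_sum i) outer_sumE (negPf i0) ri0 eqxx mulr0 sub0r mulr1.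
by move=> B PB; rewrite block_sum // ri0 irr0 sum_cfun1 ?block_subH.
Qed.

Lemma kraw_principal :
  kraw G [set (0 : Iirr G)] (G :\: H) = #|G :\: H|%:R /\
  (forall B, B \in P -> kraw G [set (0 : Iirr G)] B = kraw H [set (0 : Iirr H)] B).
Proof.
rewrite /kraw !pick_set1 !irr0; split; first exact/sum_cfun1/subsetDl.
move=> B PB; have sBH := block_subH B PB.
by rewrite !sum_cfun1 // (subset_trans sBH sHG).
Qed.

Lemma kraw_lift Q : Q \in dual_partition H P -> lift_block G H Q != set0 ->
  kraw G (lift_block G H Q) (G :\: H) = 0 /\
  (forall B, B \in P -> kraw G (lift_block G H Q) B = kraw H Q B).
Proof.
rewrite dual_partitionE => /imsetP[j _ ->] nz_lift.
have [i] := pick_in 0 nz_lift; rewrite lift_blockE => /andP[ri0 rij] pick_i.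
have i0 : i != 0 by apply: contraNneq ri0 => ->; rewrite Res_Iirr0.
rewrite /kraw pick_i; split.
  by rewrite -/(outer_sum i) outer_sumE (negPf i0) (negPf ri0) !mulr0 subrr.
move=> B PB; rewrite block_sum //.
have [|k jk ->] := pick_in 0 (_ : dual_class H P j != set0).
  by apply/set0Pn; exists j; exact: mem_dual_class.
by move: rij jk; rewrite !inE => /dual_rel_left -> /forall_inP/(_ B PB)/eqP.
Qed.

Lemma bidual_rel_ext g h : g \in G -> h \in G ->
  bidual_rel G P' g h = ((g \in H) == (h \in H)) &&
    [forall Q in dual_partition H P :\ [set (0 : Iirr H)],
       \sum_(j in Q | j != 0) 'chi[H]_j g == \sum_(j in Q | j != 0) 'chi[H]_j h].
Proof.
move=> Gg Gh; have nz_idx : (#|G : H|%g%:R : algC) != 0.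
  by rewrite pnatr_eq0 -lt0n indexg_gt0.
have perp_eq : (\sum_(i in perp G H :\ (0 : Iirr G)) 'chi[G]_i g ==
                \sum_(i in perp G H :\ (0 : Iirr G)) 'chi[G]_i h) = ((g \in H) == (h \in H)).
  by rewrite !perp_sum // (inj_eq (addIr _)) (inj_eq (mulfI nz_idx)) eqr_nat; do 2!case: (_ \in H).
have lift_eq Q : (\sum_(i in lift_block G H Q) 'chi[G]_i g ==
                  \sum_(i in lift_block G H Q) 'chi[G]_i h) =
    (\sum_(j in Q | j != 0) 'chi[H]_j g == \sum_(j in Q | j != 0) 'chi[H]_j h).
  by rewrite !lift_block_sum // (inj_eq (mulfI nz_idx)).
rewrite /bidual_rel dual_partition_ext -perp_eq.
apply/forall_inP/andP => [e | [e_perp /forall_inP e] X].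
  split; first by apply: e; rewrite in_set setU11 perp_nontrivial.
  apply/forall_inP => Q HQ; rewrite -lift_eq.
  have [-> | nz] := eqVneq (lift_block G H Q) set0; first by rewrite !big_set0.
  by apply: e; rewrite in_set nz andbT; apply/setU1r/setU1r/imset_f.
rewrite in_set !in_setU1 => /andP[/or3P[/eqP-> // | /eqP-> | /imsetP[Q HQ ->]] _].
  by rewrite !big_set1 irr0 !cfun1E Gg Gh.
by rewrite lift_eq; apply: e.
Qed.

Lemma bidual_class_outside g : g \in G :\: H ->
  [set y in G | bidual_rel G P' g y] = G :\: H.
Proof.
move=> /setDP[Gg gH]; apply/setP => y; rewrite inE in_setD.
have [Gy | _] := boolP (y \in G); last by rewrite andbF.
rewrite bidual_rel_ext // (negPf gH) andbT eq_sym.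
have [Hy | Hy] //= := boolP (y \in H).
by apply/forall_inP => Q _; rewrite !big1 // => j _; rewrite cfun0.
Qed.

(* ... and inside H it is the bidual class for P, since the dual block {eps_H}
   sums to 1 on H and the other blocks differ from their non-principal parts
   by a constant. *)
Lemma bidual_class_inside g : g \in H ->
  [set y in G | bidual_rel G P' g y] = [set y in H | bidual_rel H P g y].
Proof.
move=> Hg; have Gg := subsetP sHG g Hg; apply/setP => y; rewrite !inE.
have [Hy | Hy] := boolP (y \in H); last first.
  by case: (boolP (y \in G)) => Gy //; rewrite bidual_rel_ext // Hg (negPf Hy).
have Gy := subsetP sHG y Hy; rewrite Gy bidual_rel_ext // Hg Hy eqxx /=.
apply/forall_inP/forall_inP => e Q HQ.
  have [-> | Q0] := eqVneq Q [set 0]; first by rewrite !big_set1 irr0 !cfun1E Hg Hy.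
  by rewrite (sum_irr_split _ Q _ Hg) (sum_irr_split _ Q _ Hy) (eqP (e Q _)) // in_setD1 Q0.
move: HQ; rewrite in_setD1 => /andP[_ HQ].
by have := e Q HQ; rewrite (sum_irr_split _ Q _ Hg) (sum_irr_split _ Q _ Hy) (inj_eq (addIr _)).
Qed.

Lemma reflexive_ext : reflexive_partition H P -> reflexive_partition G P'.
Proof.
rewrite /reflexive_partition !bidual_partitionE => /eqP reflH.
have inP Y : (Y \in P) = (Y \in [set [set y in H | bidual_rel H P x y] | x in H]).
  by rewrite reflH.
apply/eqP/setP => X; apply/imsetP/idP => [[g Gg ->] | ].
  have [Hg | gH] := boolP (g \in H); last by rewrite bidual_class_outside ?setU11 // in_setD gH.
  by rewrite bidual_class_inside // setU1r // inP; apply/imsetP; exists g.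
rewrite in_setU1 => /predU1P[-> | ].
  case/properP: properHG => _ [g Gg gH].
  by exists g => //; rewrite bidual_class_outside // in_setD gH.
rewrite inP => /imsetP[g Hg ->]; exists g; first exact: (subsetP sHG).
by rewrite bidual_class_inside.
Qed.

End DualPartition.
End ProperSubgroup.
End Restriction.

Theorem proposition2p12 (gT : finGroupType) (G H : {group gT})
  (P : {set {set gT}})
  (abelG : abelian G) (properHG : H \proper G) (partP : partition P H) :
  let P' := (G :\: H) |: P in
  let Qm1 := perp G H :\ (0 : Iirr G) in
  [/\ dual_partition G P' =
        [set Q in Qm1 |: ([set (0 : Iirr G)] |:
           [set lift_block G H Q | Q in dual_partition H P :\ [set (0 : Iirr H)]])
          | Q != set0],
      (* l = -1 *)
      kraw G Qm1 (G :\: H) = - (#|H|%:R) /\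
      (forall B, B \in P -> kraw G Qm1 B = #|B|%:R),
      (* l = 0 *)
      kraw G [set (0 : Iirr G)] (G :\: H) = #|G :\: H|%:R /\
      (forall B, B \in P -> kraw G [set (0 : Iirr G)] B = kraw H [set (0 : Iirr H)] B),
      (* l >= 1 *)
      (forall Q, Q \in dual_partition H P -> Q != [set (0 : Iirr H)] ->
         lift_block G H Q != set0 ->
         kraw G (lift_block G H Q) (G :\: H) = 0 /\
         (forall B, B \in P -> kraw G (lift_block G H Q) B = kraw H Q B))
    & (reflexive_partition H P -> reflexive_partition G P')].
Proof.
have sHG := proper_sub properHG.
move=> P' Qm1; split.
- exact: dual_partition_ext.
- exact: kraw_perp.
- exact: kraw_principal.
- by move=> Q dualQ _; exact: kraw_lift.
- exact: reflexive_ext.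
Qed.
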